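(* Let $n\in\mathbb{N}$ with $n>1$ and $r:=1/n$. The unique solution $u$ of $D_ru=0$ in $(0,1)$, $u=0$ in $[-r,0]$, $u=1$ in $[1,1+r]$ is discontinuous (it has no continuous representative on $[-r,1+r]$).
   Context: $D_ru(x):=\dfrac{u(x+r)+u(x-r)-2u(x)}{r^2}$; the equation is required a.e. in $(0,1)$ and solutions are identified up to null sets. *)

From Stdlib Require Import Reals Lra.
Open Scope R_scope.

Definition null_set (S : R -> Prop) : Prop :=
  forall eps : R, 0 < eps ->
    exists a b : nat -> R,
      (forall k, a k <= b k) /\
      (forall x, S x -> exists k, a k < x < b k) /\
      (forall N, sum_f_R0 (fun k => b k - a k) N <= eps).

Definition ae_on (A : R -> Prop) (P : R -> Prop) : Prop :=
  null_set (fun x => A x /\ ~ P x).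

Definition Dr (r : R) (u : R -> R) (x : R) : R :=
  (u (x + r) + u (x - r) - 2 * u x) / r ^ 2.

Definition is_solution (r : R) (u : R -> R) : Prop :=
  ae_on (fun x => 0 < x < 1) (fun x => Dr r u x = 0) /\
  ae_on (fun x => - r <= x <= 0) (fun x => u x = 0) /\
  ae_on (fun x => 1 <= x <= 1 + r) (fun x => u x = 1).

Definition continuous_on_Icc (a b : R) (v : R -> R) : Prop :=
  forall x, a <= x <= b ->
    forall eps, 0 < eps -> exists delta, 0 < delta /\
      forall y, a <= y <= b -> Rabs (y - x) < delta -> Rabs (v y - v x) < eps.

From Stdlib Require Import Reals Lra Lia ZArith List Classical.
Open Scope R_scope.

(* Let r = 1/n with n > 1.  The nonlocal equation D_r u = 0 only couples
   values of u at points differing by a multiple of r, so [-r, 1+r] splits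
   into chains t - r, t, t + r, ..., t + n r (0 < t < r), plus the finitely
   many grid points z r.  On each chain the equation with boundary values
   0 and 1 is a discrete Dirichlet problem whose only solution is linear. *)

Lemma partial_sum_mono (f : nat -> R) : (forall k, 0 <= f k) ->
  forall m p, sum_f_R0 f m <= sum_f_R0 f (m + p).
Proof.
  intros Hf m p; induction p as [|p IH].
  - rewrite Nat.add_0_r; lra.
  - rewrite Nat.add_succ_r; simpl; specialize (Hf (S (m + p))); lra.
Qed.

Lemma null_subset (P Q : R -> Prop) :
  (forall x, P x -> Q x) -> null_set Q -> null_set P.
Proof.
  intros H HQ eps He; destruct (HQ eps He) as [a [b [Hab [Hcov Hsum]]]].
  exists a, b; repeat split; auto.
Qed.

Definition interleave (s1 s2 : nat -> R) (k : nat) : R :=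
  if Nat.even k then s1 (Nat.div2 k) else s2 (Nat.div2 k).

Lemma interleave_even s1 s2 k : interleave s1 s2 (2 * k) = s1 k.
Proof. unfold interleave; rewrite Nat.even_even, Nat.div2_double; reflexivity. Qed.

Lemma interleave_odd s1 s2 k : interleave s1 s2 (S (2 * k)) = s2 k.
Proof.
  unfold interleave; replace (S (2 * k)) with (2 * k + 1)%nat by lia.
  rewrite Nat.even_odd; replace (2 * k + 1)%nat with (S (2 * k)) by lia.
  rewrite Nat.div2_succ_double; reflexivity.
Qed.

Lemma interleave_sum s1 s2 M :
  sum_f_R0 (interleave s1 s2) (S (2 * M)) = sum_f_R0 s1 M + sum_f_R0 s2 M.
Proof.
  induction M as [|M IH].
  - pose proof (interleave_even s1 s2 0) as E0; pose proof (interleave_odd s1 s2 0) as E1.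
    simpl in *; rewrite E0, E1; ring.
  - replace (S (2 * S M)) with (S (S (S (2 * M)))) by lia.
    change (sum_f_R0 (interleave s1 s2) (S (S (S (2 * M)))))
      with (sum_f_R0 (interleave s1 s2) (S (2 * M))
            + interleave s1 s2 (S (S (2 * M))) + interleave s1 s2 (S (S (S (2 * M))))).
    rewrite IH; simpl sum_f_R0.
    replace (S (S (2 * M))) with (2 * S M)%nat by lia.
    rewrite interleave_even, interleave_odd; ring.
Qed.

(* A union of two null sets is null: interleave two covers of length eps/2. *)
Lemma null_union (P Q : R -> Prop) : null_set P -> null_set Q ->
  null_set (fun x => P x \/ Q x).
Proof.
  intros HP HQ eps He.
  destruct (HP (eps/2) ltac:(lra)) as [a1 [b1 [Hab1 [Hcov1 Hsum1]]]].
  destruct (HQ (eps/2) ltac:(lra)) as [a2 [b2 [Hab2 [Hcov2 Hsum2]]]].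
  exists (interleave a1 a2), (interleave b1 b2); split; [|split].
  - intros k; unfold interleave; destruct (Nat.even k); auto.
  - intros x [Hx|Hx].
    + destruct (Hcov1 x Hx) as [k Hk]; exists (2 * k)%nat.
      rewrite !interleave_even; auto.
    + destruct (Hcov2 x Hx) as [k Hk]; exists (S (2 * k)).
      rewrite !interleave_odd; auto.
  - set (len1 := fun k => b1 k - a1 k); set (len2 := fun k => b2 k - a2 k).
    assert (Hlen : forall k, interleave b1 b2 k - interleave a1 a2 k
                             = interleave len1 len2 k)
      by (intros k; unfold interleave; destruct (Nat.even k); reflexivity).
    assert (Hnonneg : forall k, 0 <= interleave len1 len2 k).
    { intros k; unfold interleave, len1, len2; destruct (Nat.even k);
        [specialize (Hab1 (Nat.div2 k)) | specialize (Hab2 (Nat.div2 k))]; lra. }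
    intros N; rewrite (sum_eq _ _ N (fun k _ => Hlen k)).
    pose proof (partial_sum_mono _ Hnonneg N (S N)) as Hmono.
    replace (N + S N)%nat with (S (2 * N)) in Hmono by lia.
    rewrite interleave_sum in Hmono.
    specialize (Hsum1 N); specialize (Hsum2 N); unfold len1, len2 in *; lra.
Qed.

Lemma null_point (x0 : R) : null_set (fun x => x = x0).
Proof.
  intros eps He.
  exists (fun k => match k with O => x0 - eps/4 | _ => x0 end).
  exists (fun k => match k with O => x0 + eps/4 | _ => x0 end).
  split; [|split].
  - intros [|k]; lra.
  - intros x ->; exists O; lra.
  - intros N; induction N as [|N IH]; simpl in *; lra.
Qed.

Lemma null_translate (P : R -> Prop) (c : R) :
  null_set P -> null_set (fun x => P (x + c)).
Proof.
  intros HP eps He; destruct (HP eps He) as [a [b [Hab [Hcov Hsum]]]].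
  exists (fun k => a k - c), (fun k => b k - c); split; [|split].
  - intros k; specialize (Hab k); lra.
  - intros x Hx; destruct (Hcov _ Hx) as [k Hk]; exists k; lra.
  - intros N; eapply Rle_trans; [|apply (Hsum N)]; right.
    apply sum_eq; intros; ring.
Qed.

Lemma null_finite_union (P : Z -> R -> Prop) (lo hi : Z) : (lo <= hi)%Z ->
  (forall z, (lo <= z <= hi)%Z -> null_set (P z)) ->
  null_set (fun x => exists z, (lo <= z <= hi)%Z /\ P z x).
Proof.
  intros Hlh H.
  assert (Hnat : forall M, (M <= Z.to_nat (hi - lo))%nat ->
            null_set (fun x => exists k, (k <= M)%nat /\ P (lo + Z.of_nat k)%Z x)).
  { induction M as [|M IH]; intros HM.
    - apply null_subset with (P lo);
        [intros x [k [Hk Hx]]; replace k with O in Hx by lia;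
         rewrite Z.add_0_r in Hx; exact Hx|apply H; lia].
    - apply null_subset with
        (fun x => (exists k, (k <= M)%nat /\ P (lo + Z.of_nat k)%Z x)
                  \/ P (lo + Z.of_nat (S M))%Z x).
      + intros x [k [Hk Hx]]; destruct (Nat.eq_dec k (S M)) as [->|Hne]; [now right|].
        left; exists k; split; [lia|exact Hx].
      + apply null_union; [apply IH; lia|apply H; lia]. }
  apply null_subset with
    (fun x => exists k, (k <= Z.to_nat (hi - lo))%nat /\ P (lo + Z.of_nat k)%Z x);
    [|apply Hnat; lia].
  intros x [z [Hz Hx]]; exists (Z.to_nat (z - lo)); split; [lia|].
  replace (lo + Z.of_nat (Z.to_nat (z - lo)))%Z with z by lia; exact Hx.
Qed.

Lemma ae_on_combine (A P Q S : R -> Prop) :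
  (forall x, A x -> P x -> Q x -> S x) ->
  ae_on A P -> ae_on A Q -> ae_on A S.
Proof.
  intros Himp HP HQ; unfold ae_on in *.
  apply null_subset with (fun x => (A x /\ ~ P x) \/ (A x /\ ~ Q x));
    [|apply null_union; assumption].
  intros x [Hx HnS]; destruct (classic (P x)) as [Hp|Hp]; [|now left].
  destruct (classic (Q x)) as [Hq|Hq]; [|now right].
  exfalso; apply HnS, Himp; assumption.
Qed.

Lemma ae_on_subdomain (A B P : R -> Prop) :
  (forall x, A x -> B x) -> ae_on B P -> ae_on A P.
Proof.
  intros HAB HB; apply null_subset with (fun x => B x /\ ~ P x); [|exact HB].
  intros x [Hx HnP]; auto.
Qed.

Lemma interval_finite_subcover (a b : nat -> R) (c d : R) : c <= d ->
  (forall y, c <= y <= d -> exists k, a k < y < b k) ->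
  exists N, forall y, c <= y <= d -> exists k, (k <= N)%nat /\ a k < y < b k.
Proof.
  intros Hcd Hcov.
  (* E = points x such that [c,x] is finitely covered; its supremum is d. *)
  set (E := fun x => c <= x <= d /\ exists N, forall y, c <= y <= x ->
                       exists k, (k <= N)%nat /\ a k < y < b k).
  assert (Ec : E c).
  { split; [lra|]. destruct (Hcov c ltac:(lra)) as [k0 Hk0]; exists k0.
    intros y Hy; exists k0; split; [lia|]; replace y with c by lra; auto. }
  assert (Hbound : bound E) by (exists d; intros x [Hx _]; lra).
  destruct (completeness E Hbound (ex_intro _ c Ec)) as [s [Hub Hlub]].
  assert (Hcs : c <= s) by (apply Hub; auto).
  assert (Hsd : s <= d) by (apply Hlub; intros x [Hx _]; lra).
  destruct (Hcov s ltac:(lra)) as [j Hj].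
  assert (Hnear : exists x, E x /\ a j < x).
  { apply NNPP; intros Hn; assert (s <= a j); [|lra].
    apply Hlub; intros x Ex; apply Rnot_lt_le; intros Hlt; apply Hn; exists x; auto. }
  destruct Hnear as [x [[Hx [N HN]] Hxa]].
  set (z := Rmin d ((s + b j) / 2)).
  assert (Hz : z <= d /\ s < z \/ z = d /\ z <= (s + b j) / 2)
    by (unfold z, Rmin; destruct (Rle_dec d ((s + b j) / 2)); lra).
  assert (Ez : E z).
  { split; [unfold z, Rmin; destruct (Rle_dec d ((s + b j) / 2)); lra|].
    exists (Nat.max N j); intros y Hy.
    destruct (Rle_dec y x) as [Hyx|Hyx].
    - destruct (HN y ltac:(lra)) as [k [Hk1 Hk2]]; exists k; split; [lia|auto].
    - exists j; split; [lia|].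
      assert (y <= (s + b j) / 2)
        by (unfold z, Rmin in Hy; destruct (Rle_dec d ((s + b j) / 2)); lra).
      lra. }
  assert (Hzd : z = d) by (assert (z <= s) by (apply Hub; auto); lra).
  rewrite Hzd in Ez; destruct Ez as [_ [N' HN']]; exists N'; auto.
Qed.

Definition total_length (a b : nat -> R) (l : list nat) : R :=
  fold_right (fun k s => b k - a k + s) 0 l.

Lemma total_length_app a b l1 l2 :
  total_length a b (l1 ++ l2) = total_length a b l1 + total_length a b l2.
Proof. induction l1; simpl; [ring|rewrite IHl1; ring]. Qed.

Lemma total_length_nonneg a b l :
  (forall k, a k <= b k) -> 0 <= total_length a b l.
Proof. intros H; induction l; simpl; [lra|specialize (H a0); lra]. Qed.

Lemma total_length_seq a b N :
  total_length a b (seq 0 (S N)) = sum_f_R0 (fun k => b k - a k) N.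
Proof.
  induction N as [|N IH]; [simpl; ring|].
  rewrite seq_S, total_length_app, IH; simpl; ring.
Qed.

(* Finitely many open intervals covering [c,d] have total length > d - c;
   by induction on their number, removing the interval containing c. *)
Lemma finite_cover_length (a b : nat -> R) (Hab : forall k, a k <= b k) :
  forall m (l : list nat), (length l <= m)%nat -> forall c d, c <= d ->
  (forall y, c <= y <= d -> exists k, In k l /\ a k < y < b k) ->
  d - c < total_length a b l.
Proof.
  induction m as [|m IH]; intros l Hl c d Hcd Hcov.
  - destruct (Hcov c ltac:(lra)) as [k [Hk _]].
    destruct l; simpl in *; [contradiction|lia].
  - destruct (Hcov c ltac:(lra)) as [k [Hk Hck]].
    destruct (in_split _ _ Hk) as [l1 [l2 ->]].
    rewrite total_length_app; simpl.
    pose proof (total_length_nonneg a b l1 Hab).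
    pose proof (total_length_nonneg a b l2 Hab).
    destruct (Rlt_le_dec d (b k)) as [Hd|Hd]; [lra|].
    assert (Hrest : d - b k < total_length a b (l1 ++ l2)).
    { apply IH; [rewrite length_app in *; simpl in Hl; lia|lra|].
      intros y Hy; destruct (Hcov y ltac:(lra)) as [k' [Hk' Hy']].
      exists k'; split; [|auto].
      apply in_app_or in Hk'; apply in_or_app; destruct Hk' as [?|[<-|?]]; auto; lra. }
    rewrite total_length_app in Hrest; lra.
Qed.

Lemma interval_not_null (P : R -> Prop) (c d : R) : c < d -> null_set P ->
  exists x, c < x < d /\ ~ P x.
Proof.
  intros Hcd HP; apply NNPP; intros Hn.
  set (c' := c + (d - c) / 4); set (d' := d - (d - c) / 4).
  destruct (HP ((d - c) / 4) ltac:(lra)) as [a [b [Hab [Hcov Hsum]]]].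
  assert (Hcov' : forall y, c' <= y <= d' -> exists k, a k < y < b k).
  { intros y Hy; apply Hcov, NNPP; intros Hy'; apply Hn; exists y.
    unfold c', d' in Hy; split; [lra|auto]. }
  destruct (interval_finite_subcover a b c' d' ltac:(unfold c', d'; lra) Hcov') as [N HN].
  assert (Hlen := finite_cover_length a b Hab _ (seq 0 (S N)) (le_n _) c' d'
                    ltac:(unfold c', d'; lra)).
  rewrite total_length_seq in Hlen; specialize (Hsum N).
  assert (d' - c' < (d - c) / 4); [|unfold c', d' in *; lra].
  eapply Rlt_le_trans; [apply Hlen|exact Hsum].
  intros y Hy; destruct (HN y Hy) as [k [Hk Hky]].
  exists k; split; [apply in_seq; lia|auto].
Qed.

Lemma no_continuous_version_of_jump (a b c delta alpha beta : R) (g v : R -> R) :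
  0 < delta -> a <= c - delta -> c + delta <= b ->
  (forall x, c - delta < x < c -> g x = alpha) ->
  (forall x, c < x < c + delta -> g x = beta) ->
  continuous_on_Icc a b v ->
  ae_on (fun x => a <= x <= b) (fun x => v x = g x) ->
  alpha = beta.
Proof.
  intros Hdelta Ha Hb Hleft Hright Hcont Hae.
  apply NNPP; intros Hne.
  assert (Heps : 0 < Rabs (beta - alpha) / 2)
    by (apply Rdiv_lt_0_compat; [apply Rabs_pos_lt; lra|lra]).
  destruct (Hcont c ltac:(lra) _ Heps) as [d [Hd Hclose]].
  set (m := Rmin d delta).
  assert (Hm : 0 < m /\ m <= d /\ m <= delta)
    by (unfold m, Rmin; destruct (Rle_dec d delta); lra).
  destruct (interval_not_null _ (c - m) c ltac:(lra) Hae) as [x1 [Hx1 Hn1]].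
  destruct (interval_not_null _ c (c + m) ltac:(lra) Hae) as [x2 [Hx2 Hn2]].
  assert (Hv1 : v x1 = alpha)
    by (rewrite <- (Hleft x1 ltac:(lra)); apply NNPP; intros H; apply Hn1; split; [lra|auto]).
  assert (Hv2 : v x2 = beta)
    by (rewrite <- (Hright x2 ltac:(lra)); apply NNPP; intros H; apply Hn2; split; [lra|auto]).
  assert (C1 := Hclose x1 ltac:(lra) ltac:(rewrite Rabs_left1; lra)).
  assert (C2 := Hclose x2 ltac:(lra) ltac:(rewrite Rabs_right; lra)).
  rewrite Hv1 in C1; rewrite Hv2 in C2.
  apply Rabs_def2 in C1; apply Rabs_def2 in C2.
  destruct (Rle_dec 0 (beta - alpha));
    [rewrite Rabs_right in C1, C2 by lra|rewrite Rabs_left in C1, C2 by lra]; lra.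
Qed.

Lemma discrete_harmonic_linear (f : nat -> R) (m : nat) :
  f O = 0 -> f (S m) = 1 ->
  (forall k, (k < m)%nat -> f (S (S k)) + f k = 2 * f (S k)) ->
  forall k, (k <= S m)%nat -> f k = INR k / (INR m + 1).
Proof.
  intros Hf0 Hfm Hrec.
  assert (Hlin : forall k, (k <= m)%nat ->
             f k = INR k * f 1%nat /\ f (S k) = INR (S k) * f 1%nat).
  { induction k as [|k IH]; intros Hk.
    - rewrite Hf0; simpl; split; ring.
    - destruct (IH ltac:(lia)) as [IH0 IH1]; split; [exact IH1|].
      specialize (Hrec k ltac:(lia)); rewrite !S_INR in *; lra. }
  assert (Hm : 0 < INR m + 1) by (pose proof (pos_INR m); lra).
  assert (Hf1 : f 1%nat = 1 / (INR m + 1)).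
  { destruct (Hlin m (le_n _)) as [_ E]; rewrite Hfm, S_INR in E.
    field_simplify_eq; lra. }
  intros k Hk; destruct (Nat.eq_dec k (S m)) as [->|Hne].
  - rewrite Hfm, S_INR; field; lra.
  - rewrite (proj1 (Hlin k ltac:(lia))), Hf1; field; lra.
Qed.

Lemma Dr_zero_midpoint (r : R) (u : R -> R) (x : R) : r <> 0 ->
  Dr r u x = 0 -> u (x + r) + u (x - r) = 2 * u x.
Proof.
  intros Hr HD; unfold Dr in HD.
  assert (Hr2 : r ^ 2 <> 0) by (apply pow_nonzero; exact Hr).
  apply Rmult_eq_compat_r with (r := r ^ 2) in HD.
  unfold Rdiv in HD; rewrite Rmult_assoc, Rinv_l, Rmult_0_l in HD by exact Hr2; lra.
Qed.

Section Staircase.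

Variable n : nat.
Hypothesis hn : (1 < n)%nat.
Local Notation r := (/ INR n).

Lemma INR_n_ge2 : 2 <= INR n.
Proof. replace 2 with (INR 2) by (simpl; ring); apply le_INR; lia. Qed.

Lemma r_pos : 0 < r.
Proof. pose proof INR_n_ge2; apply Rinv_0_lt_compat; lra. Qed.

Lemma n_mul_r : INR n * r = 1.
Proof. pose proof INR_n_ge2; field; lra. Qed.

Lemma grid_endpoints :
  IZR (Z.of_nat n) * r = 1 /\ IZR (Z.of_nat n + 1) * r = 1 + r.
Proof.
  rewrite plus_IZR, <- INR_IZR_INZ; pose proof n_mul_r; split; lra.
Qed.

(* The solution: the staircase taking the value (z+1)/(n+1) on
   [z r, (z+1) r).  It jumps by 1/(n+1) at every grid point. *)
Definition staircase (x : R) : R :=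
  (IZR (Int_part (x * INR n)) + 1) / (INR n + 1).

Lemma staircase_value (z : Z) (t : R) : 0 < t < r ->
  staircase (t + IZR z * r) = (IZR z + 1) / (INR n + 1).
Proof.
  intros Ht; pose proof INR_n_ge2; unfold staircase.
  replace ((t + IZR z * r) * INR n) with (t * INR n + IZR z) by (field; lra).
  assert (Htn : 0 < t * INR n < 1).
  { split; [nra|]. rewrite <- n_mul_r, Rmult_comm.
    apply Rmult_lt_compat_l; lra. }
  rewrite <- (Int_part_spec _ z) by lra; reflexivity.
Qed.

Definition grid_points (lo hi : Z) (x : R) : Prop :=
  exists z, (lo <= z <= hi)%Z /\ x = IZR z * r.

Lemma grid_points_null (lo hi : Z) : (lo <= hi)%Z -> null_set (grid_points lo hi).
Proof.
  intros Hlh; apply null_finite_union with (P := fun z x => x = IZR z * r); auto.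
  intros z _; apply null_point.
Qed.

Lemma grid_split (lo hi : Z) (x : R) : IZR lo * r <= x <= IZR hi * r ->
  grid_points lo hi x \/ exists z t, (lo <= z < hi)%Z /\ 0 < t < r /\ x = t + IZR z * r.
Proof.
  intros Hx; pose proof INR_n_ge2; pose proof r_pos.
  destruct (base_Int_part (x * INR n)) as [Hfl1 Hfl2].
  set (z := Int_part (x * INR n)) in *.
  assert (Hlow : IZR z * r <= x).
  { apply Rmult_le_reg_r with (INR n); [lra|].
    rewrite Rmult_assoc, Rinv_l; lra. }
  assert (Hup : x < (IZR z + 1) * r).
  { apply Rmult_lt_reg_r with (INR n); [lra|].
    rewrite Rmult_assoc, Rinv_l; lra. }
  destruct (Req_dec (IZR z * r) x) as [Hgrid|Hcell].
  - left; exists z; split; [|lra].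
    split; apply le_IZR, Rmult_le_reg_r with r; lra.
  - right; exists z, (x - IZR z * r); split; [|split; [lra|ring]].
    assert (z < hi)%Z by (apply lt_IZR, Rmult_lt_reg_r with r; lra).
    assert (lo < z + 1)%Z by (apply lt_IZR; rewrite plus_IZR; apply Rmult_lt_reg_r with r; lra).
    lia.
Qed.

Lemma ae_on_grid (lo hi : Z) (P T : R -> Prop) : (lo <= hi)%Z -> null_set T ->
  (forall z t, (lo <= z < hi)%Z -> 0 < t < r -> ~ T t -> P (t + IZR z * r)) ->
  ae_on (fun x => IZR lo * r <= x <= IZR hi * r) P.
Proof.
  intros Hlh HT HP; unfold ae_on.
  apply null_subset with (fun x => grid_points lo hi x \/
            exists z, (lo <= z <= hi)%Z /\ T (x + - (IZR z * r))).
  - intros x [Hx HnP]; destruct (grid_split lo hi x Hx) as [Hg|[z [t [Hz [Ht ->]]]]];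
      [now left|right].
    exists z; split; [lia|].
    replace (t + IZR z * r + - (IZR z * r)) with t by ring.
    apply NNPP; intros HnT; exact (HnP (HP z t Hz Ht HnT)).
  - apply null_union; [now apply grid_points_null|].
    apply null_finite_union; auto; intros z _; now apply null_translate.
Qed.

Lemma null_empty : null_set (fun _ => False).
Proof. apply null_subset with (fun x => x = 0); [tauto|apply null_point]. Qed.

Lemma staircase_solution : is_solution r staircase.
Proof.
  pose proof INR_n_ge2; pose proof r_pos; destruct grid_endpoints as [Hn1 Hn2].
  assert (Hden : INR n + 1 <> 0) by lra.
  split; [|split].
  - apply ae_on_subdomain with (fun x => IZR 0 * r <= x <= IZR (Z.of_nat n) * r);
      [intros x Hx; simpl; lra|].
    apply ae_on_grid with (T := fun _ => False); [lia|exact null_empty|].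
    intros z t _ Ht _; unfold Dr.
    replace (t + IZR z * r + r) with (t + IZR (z + 1) * r) by (rewrite plus_IZR; ring).
    replace (t + IZR z * r - r) with (t + IZR (z - 1) * r) by (rewrite minus_IZR; ring).
    rewrite !staircase_value, plus_IZR, minus_IZR by exact Ht.
    field; lra.
  - apply ae_on_subdomain with (fun x => IZR (-1) * r <= x <= IZR 0 * r);
      [intros x Hx; simpl; lra|].
    apply ae_on_grid with (T := fun _ => False); [lia|exact null_empty|].
    intros z t Hz Ht _; replace z with (-1)%Z by lia.
    rewrite staircase_value by exact Ht; simpl; field; lra.
  - apply ae_on_subdomain with
      (fun x => IZR (Z.of_nat n) * r <= x <= IZR (Z.of_nat n + 1) * r);
      [intros x Hx; lra|].
    apply ae_on_grid with (T := fun _ => False); [lia|exact null_empty|].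
    intros z t Hz Ht _; replace z with (Z.of_nat n) by lia.
    rewrite staircase_value, <- INR_IZR_INZ by exact Ht; field; lra.
Qed.

Definition exceptional (u : R -> R) (x : R) : Prop :=
  (0 < x < 1 /\ Dr r u x <> 0) \/ (- r <= x <= 0 /\ u x <> 0) \/
  (1 <= x <= 1 + r /\ u x <> 1).

Lemma exceptional_null (u : R -> R) : is_solution r u -> null_set (exceptional u).
Proof. intros [HD [HL HR]]; apply null_union; [|apply null_union]; assumption. Qed.

(* Along a chain t - r, t, t + r, ..., t + n r of non-exceptional points the
   equation is the discrete problem of discrete_harmonic_linear, so u is
   forced to take the staircase values. *)
Lemma chain_values (u : R -> R) (t : R) : 0 < t < r ->
  (forall z, (-1 <= z <= Z.of_nat n)%Z -> ~ exceptional u (t + IZR z * r)) ->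
  forall z, (-1 <= z <= Z.of_nat n)%Z -> u (t + IZR z * r) = (IZR z + 1) / (INR n + 1).
Proof.
  intros Ht Hgood; pose proof INR_n_ge2; pose proof r_pos; pose proof n_mul_r.
  set (f := fun k => u (t + (INR k - 1) * r)).
  assert (Hok : forall k, (k <= S n)%nat -> ~ exceptional u (t + (INR k - 1) * r)).
  { intros k Hk; specialize (Hgood (Z.of_nat k - 1)%Z ltac:(lia)).
    rewrite minus_IZR, <- INR_IZR_INZ in Hgood; exact Hgood. }
  assert (Hf0 : f O = 0).
  { apply NNPP; intros Hne; apply (Hok O ltac:(lia)); right; left.
    unfold f in Hne; simpl in *; split; [lra|exact Hne]. }
  assert (Hfn : f (S n) = 1).
  { apply NNPP; intros Hne; apply (Hok (S n) ltac:(lia)); right; right.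
    unfold f in Hne; rewrite S_INR in *; split; [nra|exact Hne]. }
  assert (Hrec : forall k, (k < n)%nat -> f (S (S k)) + f k = 2 * f (S k)).
  { intros k Hk.
    assert (Hkn : INR k + 1 <= INR n) by (rewrite <- S_INR; apply le_INR; lia).
    pose proof (pos_INR k).
    assert (HD : Dr r u (t + (INR (S k) - 1) * r) = 0).
    { apply NNPP; intros Hne; apply (Hok (S k) ltac:(lia)); left.
      rewrite S_INR in *; split; [nra|exact Hne]. }
    apply Dr_zero_midpoint in HD; [|lra].
    unfold f; rewrite !S_INR in *.
    replace (t + (INR k + 1 + 1 - 1) * r) with (t + (INR k + 1 - 1) * r + r) by ring.
    replace (t + (INR k - 1) * r) with (t + (INR k + 1 - 1) * r - r) by ring.
    exact HD. }
  intros z Hz.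
  assert (Hk := discrete_harmonic_linear f n Hf0 Hfn Hrec (Z.to_nat (z + 1)) ltac:(lia)).
  unfold f in Hk; rewrite INR_IZR_INZ, Z2Nat.id, plus_IZR in Hk by lia.
  replace (IZR z + IZR 1 - 1) with (IZR z) in Hk by (simpl; ring).
  rewrite Hk; reflexivity.
Qed.

Lemma solution_ae_staircase (u : R -> R) : is_solution r u ->
  ae_on (fun x => - r <= x <= 1 + r) (fun x => u x = staircase x).
Proof.
  intros Hu; destruct grid_endpoints as [_ Hn2].
  apply ae_on_subdomain with (fun x => IZR (-1) * r <= x <= IZR (Z.of_nat n + 1) * r);
    [intros x Hx; simpl; lra|].
  apply ae_on_grid with
    (T := fun t => exists z, (-1 <= z <= Z.of_nat n)%Z /\ exceptional u (t + IZR z * r));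
    [lia| |].
  - apply null_finite_union; [lia|]; intros z _.
    apply null_translate, exceptional_null, Hu.
  - intros z t Hz Ht HnT.
    rewrite staircase_value by exact Ht.
    apply chain_values; [exact Ht| |lia].
    intros z' Hz' Hexc; apply HnT; exists z'; auto.
Qed.

(* Discontinuity: the staircase jumps from 1/(n+1) to 2/(n+1) at r, so no
   function continuous on [-r, 1+r] agrees with it almost everywhere. *)
Lemma staircase_no_continuous_version (v : R -> R) :
  continuous_on_Icc (- r) (1 + r) v ->
  ~ ae_on (fun x => - r <= x <= 1 + r) (fun x => v x = staircase x).
Proof.
  intros Hcont Hae; pose proof INR_n_ge2; pose proof r_pos; pose proof n_mul_r.
  assert (Hjump : 1 / (INR n + 1) = 2 / (INR n + 1)).
  { apply (no_continuous_version_of_jump (- r) (1 + r) r r _ _ staircase v);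
      try lra; [nra| | |exact Hcont|exact Hae].
    - intros x Hx; replace x with (x + IZR 0 * r) by ring.
      rewrite staircase_value by lra; simpl; field; lra.
    - intros x Hx; replace x with (x - r + IZR 1 * r) by ring.
      rewrite staircase_value by lra; simpl; field; lra. }
  apply Rmult_eq_compat_r with (r := INR n + 1) in Hjump.
  field_simplify in Hjump; lra.
Qed.

End Staircase.

Theorem corollary1p11 (n : nat) (hn : (1 < n)%nat) :
  let r := / INR n in
  (exists u : R -> R, is_solution r u) /\
  (forall u v : R -> R, is_solution r u -> is_solution r v ->
     ae_on (fun x => - r <= x <= 1 + r) (fun x => u x = v x)) /\
  (forall u : R -> R, is_solution r u ->
     ~ (exists v : R -> R, continuous_on_Icc (- r) (1 + r) v /\
          ae_on (fun x => - r <= x <= 1 + r) (fun x => u x = v x))).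
Proof.
  cbv zeta; split; [|split].
  - exists (staircase n); exact (staircase_solution n hn).
  - intros u v Hu Hv.
    apply (ae_on_combine _ _ _ _ (fun x _ Hux Hvx => eq_trans Hux (eq_sym Hvx))
             (solution_ae_staircase n hn u Hu) (solution_ae_staircase n hn v Hv)).
  - intros u Hu [v [Hcont Hae]].
    apply (staircase_no_continuous_version n hn v Hcont).
    apply (ae_on_combine _ _ _ _ (fun x _ Huv Hus => eq_trans (eq_sym Huv) Hus)
             Hae (solution_ae_staircase n hn u Hu)).
Qed.
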